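(* In the Bayesian offline learning setting for $n$-round dynamic inference described in the context, let $\psi_m^n$ be any offline-learned estimation strategy. Then $$\mathbb P\big[(\pi_m,X_{i+1})\in A\times B\mid\pi_m,X^i,\hat Y^i\big]=\mathbf 1\{\pi_m\in A\}\,\mathbb P\big[X_{i+1}\in B\mid X_i,\hat Y_i\big]$$ for any Borel sets $A\subset\Delta$ and $B\subset\mathsf X$, any realization of $(\pi_m,X^i,\hat Y^i)$, and any $i=1,\ldots,n-1$. In other words, $(\pi_m,X_i)_{i=1}^n$ is a controlled Markov chain with control sequence $\hat Y^n$.
   Context: Setting (Bayesian offline learning for $n$-round dynamic inference). $\mathsf X,\mathsf Y,\hat{\mathsf Y},\mathsf W$ are measurable spaces and $\Delta$ is the space of probability distributions on $\mathsf W$. The following are given: a distribution $P_{X_1}$ on $\mathsf X$; probability transition kernels $K_i(\cdot\mid x,\hat y)$ from $\mathsf X\times\hat{\mathsf Y}$ to $\mathsf X$ for $i=2,\ldots,n$; a parametrized family of kernels $\{P_{Y|X,w}:w\in\mathsf W\}$ from $\mathsf X$ to $\mathsf Y$; a prior $P_W$ on $\mathsf W$; a conditional distribution $P_{Z^m|W}$ of an $m$-sample training dataset $Z^m$ with values in $(\mathsf X\times\hat{\mathsf Y})^m$; and a loss $\ell$. An offline-learned estimation strategy is a tuple $\psi_m^n=(\psi_{m,1},\ldots,\psi_{m,n})$ of maps $\psi_{m,i}:(\mathsf X\times\hat{\mathsf Y})^m\times\mathsf X^i\times\hat{\mathsf Y}^{i-1}\to\hat{\mathsf Y}$. It determines the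 joint law of $(W,Z^m,X^n,Y^n,\hat Y^n)$ as follows. $W\sim P_W$, and $Z^m\mid W\sim P_{Z^m|W}$. $X_1\sim P_{X_1}$ is independent of $(W,Z^m)$. For each $i$: given all previously generated variables, $Y_i\sim P_{Y|X,W}(\cdot\mid X_i,W)$; $\hat Y_i=\psi_{m,i}(Z^m,X^i,\hat Y^{i-1})$; and, given all variables generated up to round $i$, $X_{i+1}\sim K_{i+1}(\cdot\mid X_i,\hat Y_i)$. Let $\pi_m(\cdot)=\mathbb P[W\in\cdot\mid Z^m]$. *)

From HB Require Import structures.
From mathcomp Require Import all_boot all_order all_algebra.
From mathcomp Require Import all_classical all_reals all_analysis measurable_realfun giry.
Set Implicit Arguments. Unset Strict Implicit. Unset Printing Implicit Defensive.
Import Order.TTheory GRing.Theory Num.Theory.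
Local Open Scope classical_set_scope.
Local Open Scope ring_scope.

Definition rv_sigma {dO} {O : measurableType dO} {d'} {T' : measurableType d'}
  (f : O -> T') : set (set O) := preimage_set_system setT f measurable.

Definition rounds (lo hi : nat) : set nat := [set j | (lo <= j <= hi)%N].

Definition sub_measurable {dO} {O : measurableType dO} {R : realType}
  (G : set (set O)) (h : O -> \bar R) : Prop :=
  forall U : set (\bar R), measurable U -> G (h @^-1` U).

Definition cond_prob_version {dO} {O : measurableType dO} {R : realType}
  (P : probability O R) (G : set (set O)) (E : set O) (h : O -> \bar R) : Prop :=
  [/\ sub_measurable G h, P.-integrable setT h &
      forall S, G S -> P (E `&` S) = (\int[P]_(x in S) h x)%E].

From HB Require Import structures.
From mathcomp Require Import all_boot all_order all_algebra.
From mathcomp Require Import all_classical all_reals all_analysis measurable_realfun giry.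
Import Order.TTheory GRing.Theory Num.Theory.
Local Open Scope classical_set_scope.
Local Open Scope ring_scope.

(** Put [k := K_{i+1}(X_i, Yh_i)(B)] and let [F_i] be the sigma-algebra of the
    whole history [(W, Z^m, X^i, Y^i, Yh^i)].  The transition law makes [k] a
    version of [P[X_{i+1} in B | F_i]]; being [sigma(X_i, Yh_i)]-measurable, it
    is also a version of [P[X_{i+1} in B | X_i, Yh_i]], so [h = k] a.s.  Since
    [pi_m] is a function of [Z^m], [sigma(pi_m, X^i, Yh^i)] is contained in
    [F_i], and for [S] in it
    [P(pi_m in A, X_{i+1} in B, S) = \int_(S /\ pi_m in A) k
                                    = \int_S 1{pi_m in A} h]. *)

Section generated_sigma_algebras.
Set Implicit Arguments.
Unset Strict Implicit.
Context d (O : measurableType d).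

Lemma rv_sigma_measurable d' (T : measurableType d') (f : O -> T) :
  measurable_fun setT f -> rv_sigma f `<=` measurable.
Proof. by move=> mf _ [B mB <-]; exact: mf. Qed.

Lemma g_sigma_sub_measurable (G : set (set O)) :
  G `<=` measurable -> <<s G >> `<=` measurable.
Proof. by apply: smallest_sub; exact: sigma_algebra_measurable. Qed.

Lemma bigcup_rv_sigma_measurable d' (T : measurableType d') (I : set nat)
    (f : nat -> O -> T) :
  (forall j, I j -> measurable_fun setT (f j)) ->
  \bigcup_(j in I) rv_sigma (f j) `<=` measurable.
Proof. by move=> mf S [j Ij]; exact: rv_sigma_measurable (mf j Ij) S. Qed.

Lemma measurable_fun_g_sigma (G : set (set O)) d' (T : measurableType d')
    (f : O -> T) :
  rv_sigma f `<=` <<s G >> ->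
  measurable_fun setT (f : g_sigma_algebraType G -> T).
Proof. by move=> fG _ U mU; apply: fG; exists U. Qed.

Lemma rv_sigma_pair d1 d2 (T1 : measurableType d1) (T2 : measurableType d2)
    (f : O -> T1) (g : O -> T2) :
  rv_sigma (fun w => (f w, g w)) = <<s rv_sigma f `|` rv_sigma g >>.
Proof.
exact: esym (g_sigma_preimageU_comp (@fst T1 T2) snd (fun w => (f w, g w))).
Qed.

Lemma sub_measurable_comp (R : realType) (G : set (set O))
    d' (T : measurableType d') (f : O -> T) (phi : T -> \bar R) :
  measurable_fun setT phi -> rv_sigma f `<=` <<s G >> ->
  sub_measurable <<s G >> (phi \o f).
Proof.
move=> mphi fG U mU; apply: fG; exists (phi @^-1` U); last by rewrite setTI.
by rewrite -[X in measurable X]setTI; exact: mphi.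
Qed.

Lemma sub_measurableP (R : realType) (G : set (set O)) (h : O -> \bar R) :
  sub_measurable <<s G >> h <->
  measurable_fun setT (h : g_sigma_algebraType G -> \bar R).
Proof.
split=> [hG _ U mU|mh U mU]; first by rewrite setTI; exact: hG.
by have := mh measurableT U mU; rewrite setTI.
Qed.

Lemma sub_measurableS (R : realType) (G G' : set (set O)) (h : O -> \bar R) :
  G `<=` G' -> sub_measurable G h -> sub_measurable G' h.
Proof. by move=> GG' mh U mU; exact: GG' (mh U mU). Qed.

Lemma sub_measurable_measurable (R : realType) (G : set (set O))
    (h : O -> \bar R) :
  <<s G >> `<=` measurable -> sub_measurable <<s G >> h -> measurable_fun setT h.
Proof. by move=> GP mh _ U mU; rewrite setTI; exact: GP (mh U mU). Qed.

End generated_sigma_algebras.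

Section conditional_probability.
Set Implicit Arguments.
Unset Strict Implicit.
Context d (O : measurableType d) (R : realType) (P : probability O R).
Local Open Scope ereal_scope.

Lemma sub_measurable_ae_eq (mu : measure O R) (G : set (set O))
    (h k : O -> \bar R) :
  <<s G >> `<=` measurable ->
  sub_measurable <<s G >> h -> sub_measurable <<s G >> k ->
  mu.-integrable setT h -> (forall x, 0 <= k x) ->
  (forall S, <<s G >> S -> \int[mu]_(x in S) h x = \int[mu]_(x in S) k x) ->
  h = k %[ae mu].
Proof.
move=> GP /sub_measurableP mh /sub_measurableP mk ih k0 hk.
(* [h] and [k] are measurable on the space [T] generated by [G]; compare
   their integrals there, under the image of [mu]. *)
pose T := g_sigma_algebraType G.
have mid : measurable_fun setT (id : O -> T).
  by move=> _ S GS; rewrite setTI; exact: GP.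
have ihT := integrable_pushforward mid mh ih measurableT.
have [N [GN N0 hkN]] : h = k %[ae pushforward mu (id : O -> T)].
  apply: (integral_ae_eq measurableT ihT mk) => S _ GS.
  have ihS : mu.-integrable S h by apply: integrableS ih => //; exact: GP.
  rewrite integral_pushforward // [RHS]ge0_integral_pushforward //.
  - exact: hk.
  - exact: measurable_funTS.
by exists N; split => //; exact: GP.
Qed.

Lemma integral_setI_preimage (mu : measure O R) d' (T : measurableType d')
    (S : set O) (c : O -> T) (A : set T) (f : O -> \bar R) :
  \int[mu]_(x in S `&` c @^-1` A) f x =
  \int[mu]_(x in S) ((\1_A (c x))%:E * f x).
Proof.
rewrite integral_mkcondr; apply: eq_integral => x _.
rewrite patchE indicE; change (x \in c @^-1` A) with (c x \in A).
by case: (c x \in A); rewrite ?mul1e ?mul0e.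
Qed.

Lemma cond_prob_version_indicM (G0 G : set (set O)) (E : set O)
    (h k : O -> \bar R) d' (T : measurableType d') (c : O -> T) (A : set T) :
  <<s G0 >> `<=` <<s G >> -> <<s G >> `<=` measurable ->
  sub_measurable <<s G0 >> k -> (forall x, 0 <= k x) ->
  (forall S, <<s G >> S -> P (E `&` S) = \int[P]_(x in S) k x) ->
  cond_prob_version P <<s G0 >> E h ->
  rv_sigma c `<=` <<s G >> -> measurable A ->
  cond_prob_version P <<s G >> (c @^-1` A `&` E)
    (fun x => (\1_A (c x))%:E * h x).
Proof.
move=> G0G GP mk k0 Ek [mh ih Eh] cG mA.
have G0P := subset_trans G0G GP.
have hk : h = k %[ae P].
  apply: sub_measurable_ae_eq G0P mh mk ih k0 _ => S G0S.
  by rewrite -Eh // Ek //; exact: G0G.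
have mhG := sub_measurableS G0G mh.
have mkG := sub_measurableS G0G mk.
have mhkG : sub_measurable <<s G >> (fun x => (\1_A (c x))%:E * h x).
  apply/sub_measurableP/emeasurable_funM; last exact/sub_measurableP.
  apply/measurable_EFinP/measurableT_comp; first exact: measurable_indic.
  exact: measurable_fun_g_sigma.
have mcA : <<s G >> (c @^-1` A) by apply: cG; exists A; rewrite ?setTI.
split=> //.
  apply: le_integrable ih => //.
    exact: sub_measurable_measurable GP mhkG.
  move=> x _; rewrite abseM indicE.
  by case: (_ \in _); rewrite /= ?normr1 ?normr0 ?mul1e ?mul0e ?abse_ge0.
move=> S GS; have GSA : <<s G >> (S `&` c @^-1` A).
  exact: (@measurableI _ (g_sigma_algebraType G)).
rewrite -setIA setIC -setIA Ek // -integral_setI_preimage.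
apply: ae_eq_integral; first exact: GP.
- exact/measurable_funTS/(sub_measurable_measurable GP mkG).
- exact/measurable_funTS/(sub_measurable_measurable GP mhG).
- by apply: filterS hk => x hkx _; rewrite hkx.
Qed.

End conditional_probability.

Theorem lemma2
  (R : realType) (n m : nat)
  (dX dY dYh dW : measure_display)
  (TX : measurableType dX) (TY : measurableType dY)
  (TYh : measurableType dYh) (TW : measurableType dW)
  (* model ingredients *)
  (PX1 : probability TX R)
  (K : nat -> R.-pker (TX * TYh) ~> TX)
  (PY : R.-pker (TX * TW) ~> TY)
  (PW : probability TW R)
  (PZ : R.-pker TW ~> m.-tuple (TX * TYh))
  (* offline-learned estimation strategy psi_{m,i}, i = 1..n *)
  (psi : forall i : nat, m.-tuple (TX * TYh) -> i.-tuple TX -> i.-1.-tuple TYh -> TYh)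
  (psi_meas : forall i : nat, (1 <= i <= n)%N ->
     measurable_fun setT
       (fun t : m.-tuple (TX * TYh) * i.-tuple TX * i.-1.-tuple TYh =>
          psi i t.1.1 t.1.2 t.2))
  (* the underlying probability space and the random variables (rounds indexed 1..n) *)
  (dO : measure_display) (Omega : measurableType dO) (P : probability Omega R)
  (W : Omega -> TW) (Z : Omega -> m.-tuple (TX * TYh))
  (X : nat -> Omega -> TX) (Y : nat -> Omega -> TY) (Yh : nat -> Omega -> TYh)
  (mW : measurable_fun setT W) (mZ : measurable_fun setT Z)
  (mX : forall i, (1 <= i <= n)%N -> measurable_fun setT (X i))
  (mY : forall i, (1 <= i <= n)%N -> measurable_fun setT (Y i))
  (mYh : forall i, (1 <= i <= n)%N -> measurable_fun setT (Yh i))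
  (* W ~ P_W *)
  (HW : forall E, measurable E -> P (W @^-1` E) = PW E)
  (* Z^m | W ~ P_{Z^m|W} *)
  (HZ : forall E C, measurable E -> measurable C ->
     P (W @^-1` E `&` Z @^-1` C) = (\int[P]_(w in W @^-1` E) PZ (W w) C)%E)
  (* X_1 ~ P_{X_1}, independent of (W, Z^m) *)
  (HX1 : forall D S, measurable D -> <<s rv_sigma W `|` rv_sigma Z >> S ->
     P (X 1%N @^-1` D `&` S) = (PX1 D * P S)%E)
  (* Y_i | (W, Z^m, X^i, Y^{i-1}, Yh^{i-1}) ~ P_{Y|X,W}(. | X_i, W) *)
  (HY : forall i, (1 <= i <= n)%N -> forall D S, measurable D ->
     <<s rv_sigma W `|` rv_sigma Z
         `|` \bigcup_(j in rounds 1 i) rv_sigma (X j)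
         `|` \bigcup_(j in rounds 1 i.-1) rv_sigma (Y j)
         `|` \bigcup_(j in rounds 1 i.-1) rv_sigma (Yh j) >> S ->
     P (Y i @^-1` D `&` S) = (\int[P]_(w in S) PY (X i w, W w) D)%E)
  (* Yh_i = psi_{m,i}(Z^m, X^i, Yh^{i-1}) *)
  (HYh : forall i, (1 <= i <= n)%N -> forall w,
     Yh i w = psi i (Z w) [tuple X j.+1 w | j < i] [tuple Yh j.+1 w | j < i.-1])
  (* X_{i+1} | (W, Z^m, X^i, Y^i, Yh^i) ~ K_{i+1}(. | X_i, Yh_i) *)
  (HX : forall i, (1 <= i <= n.-1)%N -> forall D S, measurable D ->
     <<s rv_sigma W `|` rv_sigma Z
         `|` \bigcup_(j in rounds 1 i) rv_sigma (X j)
         `|` \bigcup_(j in rounds 1 i) rv_sigma (Y j)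
         `|` \bigcup_(j in rounds 1 i) rv_sigma (Yh j) >> S ->
     P (X i.+1 @^-1` D `&` S) = (\int[P]_(w in S) K i.+1 (X i w, Yh i w) D)%E)
  (* pi_m = P[W in . | Z^m]: a measurable posterior map z |-> post z *)
  (post : m.-tuple (TX * TYh) -> giry TW R)
  (mpost : measurable_fun setT post)
  (post1 : forall z, post z setT = 1%E)
  (Hpost : forall E C, measurable E -> measurable C ->
     P (W @^-1` E `&` Z @^-1` C) = (\int[P]_(w in Z @^-1` C) post (Z w) E)%E) :
  let pi := fun w => post (Z w) in
  forall i, (1 <= i <= n.-1)%N ->
  forall (A : set (giry TW R)) (B : set TX), measurable A -> measurable B ->
  forall h : Omega -> \bar R,
    (* h is a version of P[X_{i+1} in B | X_i, Yh_i] *)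
    cond_prob_version P <<s rv_sigma (X i) `|` rv_sigma (Yh i) >>
      (X i.+1 @^-1` B) h ->
    (* then 1{pi_m in A} h is a version of P[(pi_m, X_{i+1}) in A x B | pi_m, X^i, Yh^i] *)
    cond_prob_version P
      <<s rv_sigma pi `|` \bigcup_(j in rounds 1 i) rv_sigma (X j)
          `|` \bigcup_(j in rounds 1 i) rv_sigma (Yh j) >>
      (pi @^-1` A `&` X i.+1 @^-1` B)
      (fun w => ((\1_A (pi w))%:E * h w)%E).
Proof.
move=> pi i /andP[i1 iN] A B mA mB h hB.
have iNn : (1 <= i <= n.-1)%N by rewrite i1 iN.
have round_i : rounds 1 i i by rewrite /rounds /= i1 leqnn.
have roundsN j : rounds 1 i j -> (1 <= j <= n)%N.
  by case/andP=> j1 ji; rewrite j1 (leq_trans ji) // (leq_trans iN) ?leq_pred.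
have piZ : rv_sigma pi `<=` rv_sigma Z :=
  preimage_set_system_compS (f := Z) (D := setT) mpost.
apply: (cond_prob_version_indicM (G0 := rv_sigma (X i) `|` rv_sigma (Yh i))
  (k := fun w => K i.+1 (X i w, Yh i w) B)) => //.
- apply: sub_sigma_algebra2; rewrite subUset.
  by split=> S HS; [left; right | right]; exists i.
- apply: g_sigma_sub_measurable; rewrite !subUset; split; first split.
  + exact: subset_trans piZ (rv_sigma_measurable mZ).
  + by apply: bigcup_rv_sigma_measurable => j /roundsN; exact: mX.
  + by apply: bigcup_rv_sigma_measurable => j /roundsN; exact: mYh.
- apply: sub_measurable_comp (measurable_kernel (K i.+1) B mB) _.
  by rewrite rv_sigma_pair.
- move=> S GS; rewrite HX //; apply: sub_sigma_algebra2 GS.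
  rewrite !subUset; split; first split.
  + by move=> S' /piZ ZS'; left; left; left; right.
  + by move=> S' HS'; left; left; right.
  + by move=> S' HS'; right.
- by move=> S HS; apply: sub_sigma_algebra; left; left.
Qed.
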